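(* Let $a, b \ge 2$ be integers and let $R_{a,b} = \{C_{i,j} : 1 \le i \le a,\ 1 \le j \le b\}$ be the rectangular polyomino of size $n = ab$. Then on the $ab \times ab$ board, $$\mathrm{cp}_{\mathrm{fixed}}(R_{a,b}) = \left\lceil \frac{ab-a+1}{2a-1} \right\rceil \left\lceil \frac{ab-b+1}{2b-1} \right\rceil.$$
   Context: For integers $i,j$, $C_{i,j}$ denotes the unit square cell in column $i$ and row $j$ of the integer grid (columns numbered left to right, rows numbered top to bottom). A polyomino is a finite set of cells; its size is its number of cells. For a polyomino $\mathcal{P}$ of size $n$ the board is $\mathbb{B} = \{C_{i,j} : 1 \le i,j \le n\}$. The shift of $\mathcal{P}$ by integers $(c,d)$ is $\mathcal{P}+(c,d) = \{C_{x+c,y+d} : C_{x,y} \in \mathcal{P}\}$; a fixed copy of $\mathcal{P}$ is any shift of $\mathcal{P}$ (no rotations). A set of polyominoes is a valid arrangement if each is contained in $\mathbb{B}$ and they are pairwise disjoint. A fixed packing of $\mathcal{P}$ is a set of fixed copies of $\mathcal{P}$ forming a valid arrangement such that adding any further fixed copy of $\mathcal{P}$ yields an invalid arrangement. The clumsy fixed packing number $\mathrm{cp}_{\mathrm{fixed}}(\mathcal{P})$ is the minimum number of polyominoes in a fixed packing of $\mathcal{P}$ on the $n \times n$ board. *)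

From mathcomp Require Import all_boot all_order all_algebra.
From mathcomp Require Import finmap.
Set Implicit Arguments. Unset Strict Implicit. Unset Printing Implicit Defensive.
Import GRing.Theory Num.Theory.
Local Open Scope fset_scope.

(* A cell C_{i,j} is represented by the pair (i, j) : column i, row j. *)
Definition cell := (int * int)%type.

Definition polyomino := {fset cell}.

Definition psize (P : polyomino) : nat := #|` P|.

Definition in_board (n : nat) (c : cell) : bool :=
  ((1 <= c.1)%R && (c.1 <= n%:Z)%R) && ((1 <= c.2)%R && (c.2 <= n%:Z)%R).

Definition shift (P : polyomino) (c d : int) : polyomino :=
  [fset ((x.1 + c)%R, (x.2 + d)%R) | x in P].

Definition fixed_copy (P Q : polyomino) : Prop :=
  exists c d : int, Q = shift P c d.

Definition valid_arrangement (n : nat) (S : {fset polyomino}) : Prop :=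
  (forall Q, Q \in S -> forall x, x \in Q -> in_board n x) /\
  (forall Q1 Q2, Q1 \in S -> Q2 \in S -> Q1 != Q2 -> [disjoint Q1 & Q2]).

Definition fixed_packing (P : polyomino) (S : {fset polyomino}) : Prop :=
  (forall Q, Q \in S -> fixed_copy P Q) /\
  valid_arrangement (psize P) S /\
  (forall Q, fixed_copy P Q -> Q \notin S ->
     ~ valid_arrangement (psize P) (Q |` S)).

Definition is_cp_fixed (P : polyomino) (m : nat) : Prop :=
  (exists S, fixed_packing P S /\ #|` S| = m) /\
  (forall S, fixed_packing P S -> m <= #|` S|).

Definition rect (a b : nat) : polyomino :=
  [fset x | x in [seq ((i%:Z)%R, (j%:Z)%R) | i <- iota 1 a, j <- iota 1 b]].

Definition ceil_div (x y : nat) : nat := (x + y - 1) %/ y.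

(* A copy of R_{a,b} is a shift by (c, d), and two copies overlap exactly when
   both their column ranges and their row ranges overlap, so the problem splits
   into two one-dimensional ones: placing intervals of length L in [1, n].
   Intervals whose left ends are 2L - 1 apart leave gaps of only L - 1 cells,
   so ceil((n - L + 1) / (2L - 1)) of them already form a maximal packing, and
   the product of the two families is a maximal packing of the board.
   Conversely, the probe copies at positions (i (2a - 1), j (2b - 1)) are so far
   apart that no copy meets two of them, while maximality forces every probe to
   meet some copy of the packing; hence every fixed packing has at least as many
   copies as there are probes. *)

From mathcomp Require Import all_boot all_order all_algebra.
From mathcomp Require Import finmap.
From mathcomp Require Import zify.
Set Implicit Arguments.
Unset Strict Implicit.
Import GRing.Theory Num.Theory.

(* A position c : int stands for the interval of cells c + 1, ..., c + L. *)
Definition overlap (L : nat) (c c' : int) : bool := (`|c - c'| < L%:Z)%R.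

Definition fits (L n : nat) (c : int) : bool := (0 <= c <= n%:Z - L%:Z)%R.

Definition line_packing (L n : nat) (cs : seq int) :=
  [/\ uniq cs, {in cs, forall c, fits L n c},
      {in cs &, forall c c', overlap L c c' -> c = c'}
    & forall c, fits L n c -> has (overlap L c) cs].

Definition line_probes (L n : nat) (ps : seq int) :=
  [/\ uniq ps, {in ps, forall p, fits L n p}
    & forall c, {in ps &, forall p p', overlap L p c -> overlap L p' c -> p = p'}].

Section Lines.

Variables L n : nat.
Hypotheses (L_gt0 : 0 < L) (L_le_n : L <= n).
Local Notation D := (2 * L - 1).

Definition cp_line := ceil_div (n - L + 1) D.

Definition clumsy_pos (i : nat) : nat := minn (i * D + (L - 1)) (n - L).

Definition clumsy_line : seq int := [seq Posz (clumsy_pos i) | i <- iota 0 cp_line].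

Definition probe_line : seq int := [seq Posz (i * D) | i <- iota 0 cp_line].

Let D_gt0 : 0 < D.
Proof. lia. Qed.

Lemma ltn_cp_line i : (i < cp_line) = (i * D <= n - L).
Proof.
rewrite /cp_line /ceil_div -leq_divRL ?D_gt0 //.
have -> : n - L + 1 + D - 1 = n - L + D by lia.
by rewrite divnDr ?dvdnn // divnn D_gt0 addn1 ltnS.
Qed.

Let mul_gap i j : i < j -> i * D + D <= j * D.
Proof. by move=> lt_ij; rewrite -mulSnr leq_mul2r lt_ij orbT. Qed.

Lemma clumsy_pos_gap i j : i < j -> j < cp_line -> clumsy_pos i + L <= clumsy_pos j.
Proof.
move=> lt_ij; rewrite ltn_cp_line /clumsy_pos => j_fits.
have := mul_gap lt_ij; lia.
Qed.

Lemma line_packing_clumsy : line_packing L n clumsy_line.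
Proof.
have gap i j : i < j -> j \in iota 0 cp_line -> ~~ overlap L (clumsy_pos i) (clumsy_pos j).
  move=> lt_ij; rewrite mem_iota add0n => j_lt.
  by have := clumsy_pos_gap lt_ij j_lt; rewrite /overlap; lia.
have overlap_clumsy_pos i j : i \in iota 0 cp_line -> j \in iota 0 cp_line ->
    overlap L (clumsy_pos i) (clumsy_pos j) -> i = j.
  move=> i_in j_in overlap_ij; case: (ltngtP i j) => [lt_ij | lt_ji | //].
    by move: (gap _ _ lt_ij j_in); rewrite overlap_ij.
  by move: overlap_ij (gap _ _ lt_ji i_in); rewrite /overlap distrC => ->.
split.
- rewrite map_inj_in_uniq ?iota_uniq // => i j i_in j_in [eq_ij].
  by apply: overlap_clumsy_pos; rewrite // /overlap eq_ij subrr.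
- by move=> _ /mapP [i _ ->]; rewrite /fits /clumsy_pos; lia.
- move=> _ _ /mapP [i i_in ->] /mapP [j j_in ->] overlap_ij.
  by rewrite (overlap_clumsy_pos i j).
- move=> c; rewrite /fits => c_fits; apply/hasP.
  pose m := `|c|%N; pose i := m %/ D.
  have i_lt : i < cp_line by rewrite ltn_cp_line; apply: leq_trans (leq_trunc_div _ _) _; lia.
  exists (Posz (clumsy_pos i)); first by apply: map_f; rewrite mem_iota.
  have := divn_eq m D; have := ltn_pmod m D_gt0; rewrite -/i /overlap /clumsy_pos; lia.
Qed.

Lemma line_probes_probe : line_probes L n probe_line.
Proof.
split.
- rewrite map_inj_in_uniq ?iota_uniq // => i j _ _ [/eqP].
  by rewrite eqn_pmul2r ?D_gt0 // => /eqP.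
- move=> p /mapP [i]; rewrite mem_iota add0n ltn_cp_line => i_fits ->.
  by rewrite /fits; lia.
- move=> c _ _ /mapP [i _ ->] /mapP [j _ ->]; rewrite /overlap => overlap_i overlap_j.
  congr Posz; case: (ltngtP i j) => [lt_ij | lt_ji | -> //].
    by have := mul_gap lt_ij; lia.
  by have := mul_gap lt_ji; lia.
Qed.

Lemma size_clumsy_line : size clumsy_line = cp_line.
Proof. by rewrite size_map size_iota. Qed.

Lemma size_probe_line : size probe_line = cp_line.
Proof. by rewrite size_map size_iota. Qed.

End Lines.

Local Open Scope fset_scope.

Definition on_board (n : nat) (Q : polyomino) := forall x, x \in Q -> in_board n x.

Lemma not_fdisjoint_mem (A B : polyomino) (x : cell) : x \in A -> x \in B -> ~~ fdisjoint A B.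
Proof. by move=> xA xB; apply/fdisjointP => /(_ x xA); rewrite xB. Qed.

Section FixedPackings.

Variable P : polyomino.
Local Notation n := (psize P).

Lemma fixed_packing_of_blocking S :
  (forall Q, Q \in S -> fixed_copy P Q) -> valid_arrangement n S ->
  (forall Q, fixed_copy P Q -> on_board n Q ->
     exists2 Q', Q' \in S & ~~ fdisjoint Q Q') ->
  fixed_packing P S.
Proof.
move=> copyS validS block; split=> //; split=> // Q copyQ QnotinS [boardQS disjQS].
have [Q' Q'S meetQQ'] := block Q copyQ (boardQS Q (fset1U1 Q S)).
have neqQQ' : Q != Q' by apply: contraNneq QnotinS => ->.
by move/negP: meetQQ'; apply; apply: disjQS; rewrite ?fset1U1 ?fset1Ur.
Qed.

Lemma shift_neq0 c d : P != fset0 -> shift P c d != fset0.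
Proof.
case/fset0Pn=> x xP; apply/fset0Pn; exists (x.1 + c, x.2 + d)%R.
exact: (in_imfset _ (fun x : cell => (x.1 + c, x.2 + d)%R) xP).
Qed.

Lemma fixed_packing_meets S T :
  P != fset0 -> fixed_packing P S -> fixed_copy P T -> on_board n T ->
  has (fun Q => ~~ fdisjoint T Q) S.
Proof.
move=> P_neq0 [_ [[boardS disjS] maxS]] copyT boardT.
case: (boolP (T \in S)) => [TS | TnotinS].
  apply/hasP; exists T => //; have [c [d eT]] := copyT.
  case/fset0Pn: (shift_neq0 c d P_neq0); rewrite -eT => x Tx.
  exact: (not_fdisjoint_mem Tx Tx).
apply/negPn/negP => /hasPn noMeet; apply: (maxS T copyT TnotinS); split.
  by move=> Q; rewrite in_fset1U => /predU1P [-> | /boardS].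
move=> Q1 Q2; rewrite !in_fset1U.
move=> /predU1P [-> | Q1S] /predU1P [-> | Q2S]; rewrite ?eqxx // => neqQ.
- exact/negbNE/noMeet.
- by rewrite fdisjoint_sym; apply/negbNE/noMeet.
- exact: disjS.
Qed.

Lemma fixed_packing_size_ge S (ts : seq polyomino) :
  P != fset0 -> fixed_packing P S -> uniq ts ->
  (forall T, T \in ts -> fixed_copy P T /\ on_board n T) ->
  (forall Q T T', fixed_copy P Q -> T \in ts -> T' \in ts ->
     ~~ fdisjoint T Q -> ~~ fdisjoint T' Q -> T = T') ->
  size ts <= #|` S|.
Proof.
move=> P_neq0 packS uniq_ts probe_ts separate_ts.
pose witness T := nth fset0 S (find (fun Q => ~~ fdisjoint T Q) S).
have witnessP T : T \in ts -> witness T \in S /\ ~~ fdisjoint T (witness T).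
  move=> Tts; have [copyT boardT] := probe_ts T Tts.
  have meetT := fixed_packing_meets P_neq0 packS copyT boardT.
  split; last exact: (nth_find fset0 meetT).
  by rewrite mem_nth -?has_find.
rewrite -(size_map witness); apply: uniq_leq_size.
  rewrite map_inj_in_uniq // => T T' Tts T'ts eq_witness.
  have [wS meetT] := witnessP T Tts; have [_ meetT'] := witnessP T' T'ts.
  apply: (separate_ts (witness T)) => //; first exact: packS.1.
  by rewrite eq_witness.
by move=> Q /mapP [T Tts ->]; have [] := witnessP T Tts.
Qed.

End FixedPackings.

Lemma mem_rect a b (x : cell) :
  (x \in rect a b) = [&& 1 <= x.1, x.1 <= a%:Z, 1 <= x.2 & x.2 <= b%:Z]%R.
Proof.
rewrite /rect in_fset /=; apply/allpairsP/idP.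
  by case=> [[i j]] /= [+ + ->] /=; rewrite !mem_iota; lia.
case: x => x1 x2 /= x_in; exists (`|x1|%N, `|x2|%N); rewrite /= !mem_iota.
by split; [lia | lia | congr pair; lia].
Qed.

Lemma psize_rect a b : psize (rect a b) = a * b.
Proof.
rewrite /psize /rect card_fseq undup_id ?size_allpairs ?size_iota //.
apply: allpairs_uniq; [exact: iota_uniq | exact: iota_uniq |].
by move=> [? ?] [? ?] _ _ [-> ->].
Qed.

Section Rectangles.

Variables a b : nat.
Hypotheses (a_gt0 : 0 < a) (b_gt0 : 0 < b).
Local Notation R := (rect a b).

Lemma mem_shift_rect c d (x : cell) :
  (x \in shift R c d) = [&& c < x.1, x.1 <= c + a%:Z, d < x.2 & x.2 <= d + b%:Z]%R.
Proof.
apply/imfsetP/idP => [[y /= + ->] | ] /=; first by rewrite mem_rect; lia.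
case: x => x1 x2 /= x_in; exists (x1 - c, x2 - d)%R; rewrite ?mem_rect /=; first lia.
by congr pair; lia.
Qed.

Lemma rect_neq0 : R != fset0.
Proof. by apply/fset0Pn; exists (1, 1)%R; rewrite mem_rect /=; lia. Qed.

Lemma shift_rect_inj c d c' d' : shift R c d = shift R c' d' -> c = c' /\ d = d'.
Proof.
move=> eq_shift.
have := mem_shift_rect c' d' (c + 1, d + 1)%R; rewrite -eq_shift !mem_shift_rect /=.
have := mem_shift_rect c d (c' + 1, d' + 1)%R; rewrite eq_shift !mem_shift_rect /=.
lia.
Qed.

Lemma fdisjoint_shift_rect c d c' d' :
  fdisjoint (shift R c d) (shift R c' d') = ~~ (overlap a c c' && overlap b d d').
Proof.
apply/fdisjointP/negP => [disj /andP [overlap_c overlap_d] | far x].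
  pose x : cell := (Num.max c c' + 1, Num.max d d' + 1)%R.
  have := disj x; rewrite !mem_shift_rect /=.
  move: overlap_c overlap_d; rewrite /overlap; lia.
rewrite !mem_shift_rect => x_in; apply/negP => x_in'; apply: far.
by rewrite /overlap; lia.
Qed.

Lemma shift_rect_on_board n c d :
  on_board n (shift R c d) <-> fits a n c && fits b n d.
Proof.
split=> [board | fit x].
  have := board (c + 1, d + 1)%R; have := board (c + a%:Z, d + b%:Z)%R.
  by rewrite !mem_shift_rect /in_board /fits /=; lia.
by rewrite mem_shift_rect /in_board; move: fit; rewrite /fits; lia.
Qed.

Definition grid (cs ds : seq int) : seq polyomino :=
  [seq shift R c d | c <- cs, d <- ds].

Lemma uniq_grid cs ds : uniq cs -> uniq ds -> uniq (grid cs ds).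
Proof.
move=> uniq_cs uniq_ds; apply: allpairs_uniq => // [[c d] [c' d']] _ _ /=.
by case/shift_rect_inj=> -> ->.
Qed.

Lemma card_grid cs ds :
  uniq cs -> uniq ds -> #|` [fset Q in grid cs ds]| = size cs * size ds.
Proof. by move=> uniq_cs uniq_ds; rewrite card_fseq undup_id ?uniq_grid ?size_allpairs. Qed.

Lemma fixed_packing_grid cs ds :
  line_packing a (a * b) cs -> line_packing b (a * b) ds ->
  fixed_packing R [fset Q in grid cs ds].
Proof.
move=> [_ fit_cs far_cs cover_cs] [_ fit_ds far_ds cover_ds].
apply: fixed_packing_of_blocking; rewrite ?psize_rect.
- by move=> Q; rewrite in_fset => /allpairsP [[c d] [_ _ ->]]; exists c, d.
- split=> [Q | Q Q'].
    rewrite in_fset => /allpairsP [[c d] [cs_c ds_d ->]].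
    by apply/shift_rect_on_board; rewrite fit_cs ?fit_ds.
  rewrite !in_fset => /allpairsP [[c d] [/= cs_c ds_d ->]].
  case/allpairsP=> [[c' d'] [/= cs_c' ds_d' ->]].
  apply: contraNT; rewrite fdisjoint_shift_rect negbK => /andP [overlap_c overlap_d].
  by rewrite (far_cs c c') // (far_ds d d').
- move=> Q [c [d ->]] /shift_rect_on_board /andP [fit_c fit_d].
  have /hasP [c0 cs_c0 overlap_c] := cover_cs c fit_c.
  have /hasP [d0 ds_d0 overlap_d] := cover_ds d fit_d.
  exists (shift R c0 d0); first by rewrite in_fset; apply/allpairsP; exists (c0, d0).
  by rewrite fdisjoint_shift_rect overlap_c overlap_d.
Qed.

Lemma fixed_packing_size_ge_grid ps qs S :
  line_probes a (a * b) ps -> line_probes b (a * b) qs ->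
  fixed_packing R S -> size ps * size qs <= #|` S|.
Proof.
move=> [uniq_ps fit_ps sep_ps] [uniq_qs fit_qs sep_qs] packS.
rewrite -(size_allpairs (shift R)).
apply: (fixed_packing_size_ge rect_neq0 packS); first exact: uniq_grid.
  rewrite psize_rect => T /allpairsP [[p q] [ps_p qs_q ->]].
  by split; [exists p, q | apply/shift_rect_on_board; rewrite fit_ps ?fit_qs].
move=> Q T T' [c [d ->]] /allpairsP [[p q] [/= ps_p qs_q ->]].
case/allpairsP=> [[p' q'] [/= ps_p' qs_q' ->]].
rewrite !fdisjoint_shift_rect !negbK.
move=> /andP [overlap_p overlap_q] /andP [overlap_p' overlap_q'].
by rewrite (sep_ps c p p') // (sep_qs d q q').
Qed.

End Rectangles.

Unset Implicit Arguments.

Theorem theorem2 (a b : nat) (ha : 2 <= a) (hb : 2 <= b) :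
  is_cp_fixed (rect a b)
    (ceil_div (a * b - a + 1) (2 * a - 1) * ceil_div (a * b - b + 1) (2 * b - 1)).
Proof.
have a_gt0 : 0 < a by lia.
have b_gt0 : 0 < b by lia.
have a_le_ab : a <= a * b by rewrite leq_pmulr.
have b_le_ab : b <= a * b by rewrite leq_pmull.
change (is_cp_fixed (rect a b) (cp_line a (a * b) * cp_line b (a * b))).
have packing_a := line_packing_clumsy a_gt0 a_le_ab.
have packing_b := line_packing_clumsy b_gt0 b_le_ab.
split.
- exists [fset Q in grid a b (clumsy_line a (a * b)) (clumsy_line b (a * b))].
  split; first exact: fixed_packing_grid packing_a packing_b.
  by rewrite card_grid ?size_clumsy_line //; [case: packing_a | case: packing_b].
- move=> S packS; rewrite -(size_probe_line a (a * b)) -(size_probe_line b (a * b)).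
  exact: fixed_packing_size_ge_grid (line_probes_probe _ _) (line_probes_probe _ _) packS.
Qed.
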